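(* Let $\Phi=(A;\{E_i\}_{i=0}^d;A^*;\{E^*_i\}_{i=0}^d)$ be a tridiagonal system on $V$ with $d\ge1$, such that $(A,A^* )$ satisfies the $q$-Serre relations, with $E_iV$ the eigenspace of $A$ for $\theta_i=q^{2i-d}$ and $E^*_iV$ the eigenspace of $A^*$ for $\theta^*_i=q^{d-2i}$. Let $\{U_i\}_{i=0}^d$ be its split decomposition, $K:V\to V$ the linear map acting on $U_i$ as $q^{d-2i}I$, $t$ a scalar, $B=A$, $B^*=tA^*+(1-t)K$, $E'_i$ the primitive idempotent of $B^*$ for $\theta^*_i$, and $\Phi'=(B;\{E_i\}_{i=0}^d;B^*;\{E'_i\}_{i=0}^d)$. If $(\{\theta_i\}_{i=0}^d,\{\theta^*_i\}_{i=0}^d,\{\zeta_i\}_{i=0}^d)$ is the parameter array of $\Phi$, then the parameter array of $\Phi'$ is $(\{\theta_i\}_{i=0}^d,\{\theta^*_i\}_{i=0}^d,\{t^i\zeta_i\}_{i=0}^d)$.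
   Context: $\mathcal K$ is an algebraically closed field; $V$ is a nonzero finite-dimensional vector space over $\mathcal K$; $q\in\mathcal K$ is nonzero and not a root of unity; $[3]_q=q^2+1+q^{-2}$. The $q$-Serre relations for $(X,Y)$: $X^3Y-[3]_qX^2YX+[3]_qXYX^2-YX^3=0$ and $Y^3X-[3]_qY^2XY+[3]_qYXY^2-XY^3=0$. Primitive idempotent of a diagonalizable $X$ for eigenvalue $\lambda_i$: $\prod_{j\ne i}\frac{X-\lambda_jI}{\lambda_i-\lambda_j}$. A tridiagonal system on $V$ is a sequence $(A;\{E_i\}_{i=0}^d;A^*;\{E^*_i\}_{i=0}^d)$ with $A,A^*$ diagonalizable, $\{E_i\}$, $\{E^*_i\}$ orderings of their primitive idempotents, $E_iA^*E_j=0$ and $E^*_iAE^*_j=0$ when $|i-j|>1$, and no subspaces other than $0,V$ invariant under both $A$ and $A^*$. Split decomposition: $U_i=(E^*_0V+\cdots+E^*_iV)\cap(E_iV+\cdots+E_dV)$; known: $V=U_0\oplus\cdots\oplus U_d$. It is a fact (proved in the paper) that $B^*$ is diagonalizable with eigenvalues $\theta^*_0,\dots,\theta^*_d$ and $\dim E'_0V=1$. For a sequence $(X;\{F_i\};X^*;\{F^*_i\})$ with $X,X^*$ diagonalizable, $F_i$ (resp. $F^*_i$) the primitive idempotents of $X$ (resp. $X^*$) for eigenvalues $\lambda_i$ (resp. $\lambda^*_i$) and $\dim F^*_0V=1$: with $\tau_i(x)=\prod_{j=0}^{i-1}(x-\lambda_j)$, $F^*_0\tau_i(X)$ acts on $F^*_0V$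 as a scalar $\chi_i$; the split sequence is $\zeta_i=\prod_{j=1}^i(\lambda^*_0-\lambda^*_j)\chi_i$, and the parameter array is $(\{\lambda_i\},\{\lambda^*_i\},\{\zeta_i\})$. *)

(* Linear maps on V = 'rV[K]_N (N = n.+1 >= 1) are matrices
   acting on the RIGHT of row vectors: v |-> v *m M.  Hence the paper's
   composition "X Y" (first Y, then X) is the matrix product  Y *m X. *)
From HB Require Import structures.
From mathcomp Require Import all_boot all_order all_algebra.
Set Implicit Arguments. Unset Strict Implicit. Unset Printing Implicit Defensive.
Import Order.TTheory GRing.Theory Num.Theory.
Local Open Scope ring_scope.

Section Defs.
Variable (K : fieldType) (N : nat).

Definition prim_idem (X : 'M[K]_N) (lam : nat -> K) (d i : nat) : 'M[K]_N :=
  \prod_(j < d.+1 | (j : nat) != i) ((lam i - lam j)^-1 *: (X - (lam j)%:M)).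

(* X is diagonalizable and its eigenvalues are exactly the distinct scalars
   lam 0, ..., lam d (so {prim_idem X lam d i} is an ordering of its primitive
   idempotents). *)
Definition diag_eigseq (X : 'M[K]_N) (lam : nat -> K) (d : nat) : Prop :=
  diagonalizable X /\
  (forall i j, (i <= d)%N -> (j <= d)%N -> lam i = lam j -> i = j) /\
  (forall i, (i <= d)%N -> eigenvalue X (lam i)) /\
  (forall a, eigenvalue X a -> exists2 i, (i <= d)%N & a = lam i).

(* tridiagonal system (A; {E_i}; A*; {E*_i}) with E_i = prim_idem A th d i,
   E*_i = prim_idem As ths d i *)
Definition tridiagonal_system (d : nat) (A : 'M[K]_N) (th : nat -> K)
    (As : 'M[K]_N) (ths : nat -> K) : Prop :=
  diag_eigseq A th d /\ diag_eigseq As ths d /\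
  (forall i j, (i <= d)%N -> (j <= d)%N -> (i.+1 < j)%N || (j.+1 < i)%N ->
     (* E_i A* E_j = 0 *)
     prim_idem A th d j *m As *m prim_idem A th d i = 0) /\
  (forall i j, (i <= d)%N -> (j <= d)%N -> (i.+1 < j)%N || (j.+1 < i)%N ->
     (* E*_i A E*_j = 0 *)
     prim_idem As ths d j *m A *m prim_idem As ths d i = 0) /\
  (forall W : 'M[K]_N, stablemx W A -> stablemx W As ->
     (W == (0 : 'M[K]_N))%MS \/ row_full W).

Definition split_comp (d : nat) (A : 'M[K]_N) (th : nat -> K)
    (As : 'M[K]_N) (ths : nat -> K) (i : nat) : 'M[K]_N :=
  ((\sum_(j < d.+1 | (j <= i)%N) prim_idem As ths d j) :&:
   (\sum_(j < d.+1 | (i <= j)%N) prim_idem A th d j))%MS.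

Definition tau (X : 'M[K]_N) (lam : nat -> K) (i : nat) : 'M[K]_N :=
  \prod_(j < i) (X - (lam j)%:M).

Definition parameter_array (d : nat) (X : 'M[K]_N) (lam : nat -> K)
    (Xs : 'M[K]_N) (lams : nat -> K) (zeta : nat -> K) : Prop :=
  diag_eigseq X lam d /\ diag_eigseq Xs lams d /\
  \rank (prim_idem Xs lams d 0) = 1%N /\
  forall i, (i <= d)%N ->
    exists chi : K,
      (forall v : 'rV[K]_N, (v <= prim_idem Xs lams d 0)%MS ->
         v *m tau X lam i *m prim_idem Xs lams d 0 = chi *: v) /\
      zeta i = (\prod_(1 <= j < i.+1) (lams 0%N - lams j)) * chi.

End Defs.

Definition qSerre (K : fieldType) (N : nat) (q : K) (X Y : 'M[K]_N) : Prop :=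
  let q3 := q ^+ 2 + 1 + q ^- 2 in
  X ^+ 3 * Y - q3 *: (X ^+ 2 * Y * X) + q3 *: (X * Y * X ^+ 2) - Y * X ^+ 3 = 0 /\
  Y ^+ 3 * X - q3 *: (Y ^+ 2 * X * Y) + q3 *: (Y * X * Y ^+ 2) - X * Y ^+ 3 = 0.

From HB Require Import structures.
From mathcomp Require Import all_boot all_order all_algebra.
From mathcomp Require Import zify.
Set Implicit Arguments. Unset Strict Implicit. Unset Printing Implicit Defensive.
Import Order.TTheory GRing.Theory Num.Theory.
Local Open Scope ring_scope.

(* On the split
   decomposition, A - th_i maps U_i into U_(i+1) and A* - ths_i maps U_i into
   U_(i-1); as Km (the paper's K) acts on U_i as ths_i, B* - ths_i agrees
   with t (A* - ths_i) on U_i.  Hence the product defining E'_0, applied to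
   U_i, is t^i times the one defining E*_0; the product of all the B* - ths_i
   kills V, so B* is diagonalizable; and E'_0 V = U_0 = E*_0 V.  Every ths_i
   is an eigenvalue of B*: otherwise B* - ths_i would map U_0 + ... + U_i
   injectively into U_0 + ... + U_(i-1), which would then be a nonzero
   A, A*-invariant subspace, hence V, although it lies in
   E*_0 V + ... + E*_(i-1) V. *)

Section ShiftedMatrices.
Variables (K : fieldType) (n : nat).
Implicit Types (X : 'M[K]_n.+1) (a b : K).

Lemma comm_subC X a b : GRing.comm (X - a%:M) (X - b%:M).
Proof.
have comm_scalar (Y : 'M[K]_n.+1) c : GRing.comm Y c%:M.
  by rewrite /GRing.comm -!mulmxE scalar_mxC.
apply: commrB; last exact: comm_scalar.
by apply/commr_sym/commrB; [exact: commr_refl | exact: comm_scalar].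
Qed.

Lemma comm_prod_subC X a (I : Type) (r : seq I) (P : pred I) (c : I -> K) :
  GRing.comm (X - a%:M) (\prod_(j <- r | P j) (X - (c j)%:M)).
Proof. by apply: commr_prod => j _; apply: comm_subC. Qed.

Lemma mulmx_prod_subC_eigen X m (v : 'M[K]_(m, n.+1)) a (I : Type) (r : seq I)
    (P : pred I) (c : I -> K) :
  v *m X = a *: v ->
  v *m \prod_(j <- r | P j) (X - (c j)%:M) = (\prod_(j <- r | P j) (a - c j)) *: v.
Proof.
move=> vX; elim/big_rec2: _ => [|j b M _ vM]; first by rewrite mulmx1 scale1r.
by rewrite -mulmxE mulmxA mulmxBr vX mul_mx_scalar -scalerBl -scalemxAl vM scalerA.
Qed.

Lemma mulmx_subC_sub X a m p (u : 'M[K]_(m, n.+1)) (W : 'M[K]_(p, n.+1)) :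
  (u <= W)%MS -> (u *m (X - a%:M) <= W)%MS = (u *m X <= W)%MS.
Proof.
move=> uW; rewrite mulmxBr mul_mx_scalar.
have aW c : (c *: u <= W)%MS by rewrite scalemx_sub.
apply/idP/idP => [uXa|uX]; last by rewrite addmx_sub // -scaleNr.
by rewrite -(subrK (a *: u) (u *m X)) addmx_sub.
Qed.

Lemma mulmx_subC_eq0 X a m (u : 'M[K]_(m, n.+1)) :
  (u *m (X - a%:M) == 0) = (u *m X == a *: u).
Proof. by rewrite mulmxBr mul_mx_scalar subr_eq0. Qed.

Lemma row_free_mulmx_sub m p (M : 'M[K]_n.+1) (S : 'M[K]_(m, n.+1))
    (T : 'M[K]_(p, n.+1)) :
  row_free M -> (T <= S)%MS -> (S *m M <= T)%MS -> (S <= T)%MS.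
Proof.
move=> freeM TS SMT; rewrite -(mxrank_leqif_sup TS).2 eqn_leq mxrankS //=.
by rewrite -(mxrankMfree _ freeM) mxrankS.
Qed.

End ShiftedMatrices.

Lemma prod_ord_neq0 (R : pzSemiRingType) d (F : nat -> R) :
  \prod_(j < d.+1 | (j : nat) != 0%N) F j = \prod_(1 <= j < d.+1) F j.
Proof.
rewrite big_mkcond big_ord_recl /= mul1r big_add1 /= big_mkord.
exact: eq_bigr.
Qed.

Section PrimitiveIdempotents.
Variables (K : fieldType) (n : nat) (X : 'M[K]_n.+1) (lam : nat -> K) (d : nat).
Hypothesis diagX : diag_eigseq X lam d.
Local Notation E := (prim_idem X lam d).

Lemma prim_idemE i :
  E i = (\prod_(j < d.+1 | (j : nat) != i) (lam i - lam j)^-1) *: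
        \prod_(j < d.+1 | (j : nat) != i) (X - (lam j)%:M).
Proof. exact: scaler_prod. Qed.

Lemma mulmx_prim_idem_eigen i j m (v : 'M[K]_(m, n.+1)) :
  (i <= d)%N -> (j <= d)%N -> v *m X = lam i *: v ->
  v *m E j = if i == j then v else 0.
Proof.
have [_ [lam_inj _]] := diagX; move=> le_id le_jd vX.
rewrite prim_idemE -scalemxAr (mulmx_prod_subC_eigen _ _ _ vX) scalerA -big_split /=.
have [<-|neq_ij] := eqVneq i j.
  rewrite big1 ?scale1r // => k neq_ki; rewrite mulVf // subr_eq0.
  by apply: contra neq_ki => /eqP/lam_inj <-; rewrite // -ltnS.
by rewrite (bigD1 (Ordinal (le_id : (i < d.+1)%N))) //= subrr !mulr0 mul0r scale0r.
Qed.

Lemma sum_eigenspace_full : (1%:M <= \sum_(k < d.+1) eigenspace X (lam k))%MS.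
Proof.
have [/diagonalizablePeigen [rs _ <-] [_ [_ eigX]]] := diagX.
elim/big_rec: _ => [|r W _ W_sub]; rewrite ?sub0mx // addsmx_sub W_sub andbT.
have [->|/eigX [i le_id ->]] := eqVneq (eigenspace X r) 0; first exact: sub0mx.
exact: (sumsmx_sup (Ordinal (le_id : (i < d.+1)%N))).
Qed.

Lemma prim_idem_eigen j : (j <= d)%N -> E j *m X = lam j *: E j.
Proof.
move=> le_jd; apply/eigenspaceP; rewrite -[E j]mul1mx.
apply: submx_trans (submxMr _ sum_eigenspace_full) _.
rewrite sumsmxMr; apply/sumsmx_subP => i _.
rewrite (mulmx_prim_idem_eigen (leq_ord i) le_jd); last exact/eigenspaceP.
by case: eqP => [<-|]; rewrite ?sub0mx.
Qed.

Lemma sum_prim_idem : \sum_(k < d.+1) E k = 1%:M.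
Proof.
apply/eqP; rewrite eq_sym -subr_eq0; apply/eqP; rewrite -[_ - _]mul1mx.
apply/sub_kermxP/(submx_trans sum_eigenspace_full)/sumsmx_subP => i _.
apply/sub_kermxP; rewrite mulmxBr mulmx1 mulmx_sumr (bigD1 i) //=.
have eigE (k : 'I_d.+1) :
    eigenspace X (lam i) *m E k = if (i : nat) == k then eigenspace X (lam i) else 0.
  by rewrite (mulmx_prim_idem_eigen (leq_ord i) (leq_ord k)) //; apply/eigenspaceP.
rewrite eigE eqxx big1 ?addr0 ?subrr // => k neq_ki.
by rewrite eigE; case: eqP => // /val_inj ik; rewrite ik eqxx in neq_ki.
Qed.

Lemma prim_idem_mul i j : (i <= d)%N -> (j <= d)%N ->
  E i *m E j = if i == j then E i else 0.
Proof.
by move=> le_id le_jd; rewrite (mulmx_prim_idem_eigen le_id) ?prim_idem_eigen.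
Qed.

Lemma prim_idem_neq0 i : (i <= d)%N -> E i != 0.
Proof.
have [_ [_ [eigX _]]] := diagX; move=> le_id; apply: contraTneq (eigX i le_id).
move=> Ei0; rewrite /eigenvalue negbK -submx0 -Ei0.
have := mulmx_prim_idem_eigen (v := eigenspace X (lam i)) le_id le_id.
by rewrite eqxx => <-; [exact: submxMl | exact/eigenspaceP].
Qed.

Lemma prim_idem_sub_sum (P : pred nat) i : (i <= d)%N ->
  (E i <= \sum_(k < d.+1 | P k) E k)%MS = P i.
Proof.
move=> le_id; apply/idP/idP => [EiP|Pi]; last first.
  exact: (sumsmx_sup (Ordinal (le_id : (i < d.+1)%N))).
apply: contraLR (prim_idem_neq0 le_id) => notPi; rewrite negbK -submx0.
have := submxMr (E i) EiP; rewrite prim_idem_mul // eqxx => /submx_trans-> //.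
rewrite sumsmxMr; apply/sumsmx_subP => k Pk.
by rewrite prim_idem_mul ?leq_ord //; case: eqP Pk => [->|]; rewrite ?(negPf notPi).
Qed.

Lemma sum_prim_idem_mulB (P Q : pred nat) i : (i <= d)%N ->
  (forall k, (k <= d)%N -> P k -> k != i -> Q k) ->
  ((\sum_(k < d.+1 | P k) E k)%MS *m (X - (lam i)%:M) <=
    \sum_(k < d.+1 | Q k) E k)%MS.
Proof.
move=> le_id PQ; rewrite sumsmxMr; apply/sumsmx_subP => k Pk.
rewrite mulmxBr prim_idem_eigen ?leq_ord // mul_mx_scalar -scalerBl.
have [->|neq_ki] := eqVneq (k : nat) i; first by rewrite subrr scale0r sub0mx.
apply/scalemx_sub/(sumsmx_sup k) => //.
exact: PQ (leq_ord k) Pk neq_ki.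
Qed.

Lemma sum_prim_idem_mul_tridiag (Y : 'M[K]_n.+1) (P Q : pred nat) :
  (forall i j, (i <= d)%N -> (j <= d)%N -> (i.+1 < j)%N || (j.+1 < i)%N ->
     E j *m Y *m E i = 0) ->
  (forall j k, (j <= d)%N -> (k <= d)%N -> P j -> (k <= j.+1)%N -> (j <= k.+1)%N ->
     Q k) ->
  ((\sum_(k < d.+1 | P k) E k)%MS *m Y <= \sum_(k < d.+1 | Q k) E k)%MS.
Proof.
move=> tridiagY PQ; rewrite sumsmxMr; apply/sumsmx_subP => j Pj.
rewrite -[_ *m Y]mulmx1 -sum_prim_idem mulmx_sumr; apply: summx_sub => k _.
have [far|] := boolP ((k.+1 < j)%N || (j.+1 < k)%N).
  by rewrite tridiagY ?leq_ord ?sub0mx.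
rewrite negb_or -!leqNgt => /andP [le_jk le_kj].
apply/(submx_trans (submxMl _ _))/(sumsmx_sup k) => //.
exact: PQ (leq_ord j) (leq_ord k) Pj le_kj le_jk.
Qed.

End PrimitiveIdempotents.

Section Flags.
Variables (K : fieldType) (n : nat) (Y : 'M[K]_n.+1) (c : nat -> K)
  (S : nat -> 'M[K]_n.+1) (d : nat).
Hypothesis lowerY : forall i, (0 < i)%N -> (i <= d)%N ->
  (S i *m (Y - (c i)%:M) <= S i.-1)%MS.

Lemma flag_prod_sub i : (i <= d)%N ->
  (S i *m \prod_(1 <= k < i.+1) (Y - (c k)%:M) <= S 0%N)%MS.
Proof.
elim: i => [|i IHi] lt_id; first by rewrite big_geq // mulmx1.
rewrite big_nat_recr //= -comm_prod_subC -mulmxE mulmxA.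
exact: submx_trans (submxMr _ (lowerY _ lt_id)) (IHi (ltnW lt_id)).
Qed.

Lemma flag_annihilator :
  S 0%N *m (Y - (c 0%N)%:M) = 0 -> row_full (\sum_(i < d.+1) S i) ->
  \prod_(k < d.+1) (Y - (c k)%:M) = 0.
Proof.
move=> kill0 fullS; apply/eqP; rewrite -submx0 -[X in (X <= _)%MS]mul1mx.
apply: submx_trans (submxMr _ (submx_full _ fullS)) _.
rewrite sumsmxMr; apply/sumsmx_subP => i _; rewrite submx0.
rewrite -(big_mkord (fun _ => true) (fun k => Y - (c k)%:M)).
rewrite (big_cat_nat _ (n := i.+1)) ?leq_ord //= big_ltn // comm_prod_subC.
rewrite -!mulmxE !mulmxA.
have /submxP [D ->] := flag_prod_sub (leq_ord i).
by rewrite -(mulmxA D) kill0 mulmx0 mul0mx.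
Qed.

Lemma flag_prod_scale (X : 'M[K]_n.+1) (t : K) :
  (forall i, (i <= d)%N -> S i *m (X - (c i)%:M) = t *: (S i *m (Y - (c i)%:M))) ->
  forall i, (i <= d)%N -> forall m (u : 'M[K]_(m, n.+1)), (u <= S i)%MS ->
  u *m \prod_(1 <= k < i.+1) (X - (c k)%:M) =
    t ^+ i *: (u *m \prod_(1 <= k < i.+1) (Y - (c k)%:M)).
Proof.
move=> scaleXY; elim=> [|i IHi] lt_id m u uS.
  by rewrite !big_geq // !mulmx1 scale1r.
rewrite !(big_nat_recr i.+1) //= -!comm_prod_subC -!mulmxE !mulmxA.
have /submxP [D uD] := uS.
have -> : u *m (X - (c i.+1)%:M) = t *: (u *m (Y - (c i.+1)%:M)).
  by rewrite uD -!mulmxA scaleXY // -scalemxAr.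
rewrite -scalemxAl (IHi (ltnW lt_id)) ?scalerA -?exprS //.
exact: submx_trans (submxMr _ uS) (lowerY _ lt_id).
Qed.

End Flags.

Section SplitDecomposition.
Variables (K : fieldType) (n : nat) (A As Km : 'M[K]_n.+1) (d : nat)
  (th ths : nat -> K) (t : K).
Hypothesis diagA : diag_eigseq A th d.
Hypothesis diagAs : diag_eigseq As ths d.
Hypothesis tridiagAs : forall i j, (i <= d)%N -> (j <= d)%N ->
  (i.+1 < j)%N || (j.+1 < i)%N -> prim_idem A th d j *m As *m prim_idem A th d i = 0.
Hypothesis tridiagA : forall i j, (i <= d)%N -> (j <= d)%N ->
  (i.+1 < j)%N || (j.+1 < i)%N -> prim_idem As ths d j *m A *m prim_idem As ths d i = 0.
Hypothesis irrAAs : forall W : 'M[K]_n.+1, stablemx W A -> stablemx W As ->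
  (W == (0 : 'M[K]_n.+1))%MS \/ row_full W.
Hypothesis Km_split : forall i, (i <= d)%N -> forall u : 'rV[K]_n.+1,
  (u <= split_comp d A th As ths i)%MS -> u *m Km = ths i *: u.

Local Notation E := (prim_idem A th d).
Local Notation Es := (prim_idem As ths d).
Local Notation U := (split_comp d A th As ths).
Local Notation Bs := (t *: As + (1 - t) *: Km).

Lemma split_comp_eq0 i : (d < i)%N -> U i = 0.
Proof.
move=> lt_di; apply/eqP; rewrite -submx0; apply: submx_trans (capmxSr _ _) _.
rewrite big_pred0 ?sub0mx // => k; apply/negbTE; rewrite -ltnNge.
exact: leq_trans (ltn_ord k) lt_di.
Qed.

Lemma split_comp_raise i : (i <= d)%N -> (U i *m (A - (th i)%:M) <= U i.+1)%MS.
Proof.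
move=> le_id; rewrite sub_capmx; apply/andP; split.
  apply: submx_trans (submxMr _ (capmxSl _ _)) _.
  rewrite mulmx_subC_sub.
    apply: (sum_prim_idem_mul_tridiag diagAs (P := fun k => (k <= i)%N)
      (Q := fun k => (k <= i.+1)%N) tridiagA) => j k *; lia.
  by apply/sumsmx_subP => k le_ki; apply: (sumsmx_sup k) => //; apply: leqW.
apply: submx_trans (submxMr _ (capmxSr _ _)) _.
apply: (sum_prim_idem_mulB diagA (P := fun k => (i <= k)%N)) => // k _ le_ik neq_ki.
by rewrite ltn_neqAle eq_sym neq_ki.
Qed.

Lemma split_comp_lower_dual i : (i <= d)%N ->
  (U i *m (As - (ths i)%:M) <= \sum_(k < d.+1 | (k < i)%N) Es k)%MS.
Proof.
move=> le_id; apply: submx_trans (submxMr _ (capmxSl _ _)) _.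
apply: (sum_prim_idem_mulB diagAs (P := fun k => (k <= i)%N)
  (Q := fun k => (k < i)%N)) => // k _ le_ki neq_ki.
by rewrite ltn_neqAle neq_ki.
Qed.

Lemma split_comp_lower i : (0 < i)%N -> (i <= d)%N ->
  (U i *m (As - (ths i)%:M) <= U i.-1)%MS.
Proof.
move=> lt0i le_id; rewrite sub_capmx; apply/andP; split.
  apply: submx_trans (split_comp_lower_dual le_id) _.
  by apply/sumsmx_subP => k lt_ki; apply: (sumsmx_sup k) => //; lia.
apply: submx_trans (submxMr _ (capmxSr _ _)) _.
rewrite mulmx_subC_sub.
  apply: (sum_prim_idem_mul_tridiag diagA (P := fun k => (i <= k)%N)
    (Q := fun k => (i.-1 <= k)%N) tridiagAs) => j k *; lia.
by apply/sumsmx_subP => k le_ik; apply: (sumsmx_sup k) => //; lia.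
Qed.

Lemma split_comp0_lower : U 0%N *m (As - (ths 0%N)%:M) = 0.
Proof.
apply/eqP; rewrite -submx0; apply: submx_trans (split_comp_lower_dual (leq0n d)) _.
by rewrite big_pred0.
Qed.

Lemma split_comp0 : (U 0%N :=: Es 0%N)%MS.
Proof.
rewrite /split_comp (big_pred1 ord0) => [|k]; last by rewrite leqn0.
apply/capmx_idPl/submx_full; rewrite -sub1mx -(sum_prim_idem diagA).
by apply: summx_sub => k _; apply: (sumsmx_sup k).
Qed.

Lemma split_comp0_neq0 : U 0%N != 0.
Proof. by rewrite -mxrank_eq0 split_comp0 mxrank_eq0 prim_idem_neq0. Qed.

Lemma split_comp_Km i m (u : 'M[K]_(m, n.+1)) : (i <= d)%N -> (u <= U i)%MS ->
  u *m Km = ths i *: u.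
Proof.
move=> le_id uU; apply/row_matrixP => r; rewrite row_mul linearZ /=.
exact/Km_split/(submx_trans (row_sub r u)).
Qed.

Lemma split_comp_Bs i m (u : 'M[K]_(m, n.+1)) : (i <= d)%N -> (u <= U i)%MS ->
  u *m (Bs - (ths i)%:M) = t *: (u *m (As - (ths i)%:M)).
Proof.
move=> le_id uU; rewrite !mulmxBr !mul_mx_scalar mulmxDr -!scalemxAr.
rewrite (split_comp_Km le_id uU) scalerBr scalerBl scale1r.
by rewrite [ths i *: u - _]addrC addrA addrK.
Qed.

Lemma split_comp_lower_Bs i : (0 < i)%N -> (i <= d)%N ->
  (U i *m (Bs - (ths i)%:M) <= U i.-1)%MS.
Proof.
by move=> lt0i le_id; rewrite split_comp_Bs // scalemx_sub ?split_comp_lower.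
Qed.

Lemma split_comp0_As_eigen m (u : 'M[K]_(m, n.+1)) : (u <= U 0%N)%MS ->
  u *m As = ths 0%N *: u.
Proof.
case/submxP=> D ->; apply/eqP; rewrite -mulmx_subC_eq0.
by rewrite -mulmxA split_comp0_lower mulmx0.
Qed.

Lemma split_comp0_Bs_eigen m (u : 'M[K]_(m, n.+1)) : (u <= U 0%N)%MS ->
  u *m Bs = ths 0%N *: u.
Proof.
move=> uU; have /eqP uAs : u *m (As - (ths 0%N)%:M) == 0.
  by rewrite mulmx_subC_eq0 split_comp0_As_eigen.
by apply/eqP; rewrite -mulmx_subC_eq0 split_comp_Bs // uAs scaler0.
Qed.

Local Notation Upto i := (\sum_(l < d.+1 | (l <= i)%N) U l)%MS.

Lemma split_comp_sub_partial l i : (l <= i)%N -> (U l <= Upto i)%MS.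
Proof.
move=> le_li; have [le_ld|lt_dl] := leqP l d.
  exact: (sumsmx_sup (Ordinal (le_ld : (l < d.+1)%N))).
by rewrite split_comp_eq0 ?sub0mx.
Qed.

Lemma partial_split_sub_dual i :
  (Upto i <= \sum_(k < d.+1 | (k <= i)%N) Es k)%MS.
Proof.
apply/sumsmx_subP => l le_li; apply: submx_trans (capmxSl _ _) _.
by apply/sumsmx_subP => k le_kl; apply: (sumsmx_sup k) => //; apply: leq_trans le_li.
Qed.

Lemma partial_split_stable_As i : stablemx (Upto i) As.
Proof.
rewrite sumsmxMr; apply/sumsmx_subP => l le_li.
rewrite -(mulmx_subC_sub _ (ths l)) ?split_comp_sub_partial //.
have [->|lt0l] := posnP l; first by rewrite split_comp0_lower sub0mx.
apply: submx_trans (split_comp_lower lt0l (leq_ord l)) _.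
by apply: split_comp_sub_partial; lia.
Qed.

Lemma partial_split_mulA i : (Upto i *m A <= Upto i.+1)%MS.
Proof.
rewrite sumsmxMr; apply/sumsmx_subP => l le_li.
rewrite -(mulmx_subC_sub _ (th l)) ?split_comp_sub_partial ?leqW //.
exact: submx_trans (split_comp_raise (leq_ord l)) (split_comp_sub_partial _).
Qed.

Lemma partial_split_lower_Bs i : (0 < i)%N -> (i <= d)%N ->
  (Upto i *m (Bs - (ths i)%:M) <= Upto i.-1)%MS.
Proof.
move=> lt0i le_id; rewrite sumsmxMr; apply/sumsmx_subP => l le_li.
have [eq_li|neq_li] := eqVneq (l : nat) i.
  rewrite eq_li; apply: submx_trans (split_comp_lower_Bs lt0i le_id) _.
  exact: split_comp_sub_partial.
have le_l_pi : (l <= i.-1)%N by lia.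
rewrite mulmx_subC_sub ?split_comp_sub_partial //.
rewrite -(mulmx_subC_sub _ (ths l)) ?split_comp_sub_partial //.
rewrite split_comp_Bs ?leq_ord // scalemx_sub //.
rewrite mulmx_subC_sub ?split_comp_sub_partial //.
apply: submx_trans (submxMr _ _) (partial_split_stable_As _).
exact: split_comp_sub_partial.
Qed.

Lemma partial_split_full i : stablemx (Upto i) A -> row_full (Upto i).
Proof.
case/irrAAs/(_ (partial_split_stable_As i)) => // /andP [Upto0 _].
case/negP: split_comp0_neq0; rewrite -submx0.
exact: submx_trans (split_comp_sub_partial (leq0n i)) Upto0.
Qed.

Lemma sum_split_comp_full : row_full (\sum_(i < d.+1) U i).
Proof.
have -> : (\sum_(i < d.+1) U i)%MS = Upto d.
  by apply: eq_bigl => l; rewrite -ltnS ltn_ord.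
apply/partial_split_full/(submx_trans (partial_split_mulA d))/sumsmx_subP => l _.
exact: split_comp_sub_partial (leq_ord l).
Qed.

Lemma Bs_annihilator : \prod_(k < d.+1) (Bs - (ths k)%:M) = 0.
Proof.
apply: (flag_annihilator split_comp_lower_Bs) sum_split_comp_full.
by rewrite split_comp_Bs // split_comp0_lower scaler0.
Qed.

Lemma eigenvalue_Bs i : (i <= d)%N -> eigenvalue Bs (ths i).
Proof.
move=> le_id; have [->|lt0i] := posnP i.
  apply: contraNneq split_comp0_neq0 => eig0; rewrite -submx0 -eig0.
  exact/eigenspaceP/split_comp0_Bs_eigen.
rewrite /eigenvalue /eigenspace kermx_eq0; apply/negP => freeB.
have Upto_le : (Upto i <= Upto i.-1)%MS.
  apply: row_free_mulmx_sub freeB _ (partial_split_lower_Bs lt0i le_id).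
  by apply/sumsmx_subP => l le_l_pi; apply: split_comp_sub_partial; lia.
have full_Upto : row_full (Upto i.-1).
  apply/partial_split_full/(submx_trans (partial_split_mulA _)).
  by rewrite prednK.
have := submx_trans (submx_full (Es i) full_Upto) (partial_split_sub_dual i.-1).
rewrite (prim_idem_sub_sum diagAs (fun k => (k <= i.-1)%N)) //.
by rewrite -ltnS prednK // ltnn.
Qed.

Lemma eigenvalue_BsP a : eigenvalue Bs a -> exists2 i, (i <= d)%N & a = ths i.
Proof.
case/eigenvalueP=> v vBs nz_v; have /eqP := congr1 (mulmx v) Bs_annihilator.
rewrite mulmx0 (mulmx_prod_subC_eigen _ _ _ vBs) scalemx_eq0 (negPf nz_v) orbF.
case/prodf_eq0=> k _; rewrite subr_eq0 => /eqP ->.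
by exists k; first exact: leq_ord.
Qed.

Lemma diagonalizable_Bs : diagonalizable Bs.
Proof.
have [_ [ths_inj _]] := diagAs.
apply/diagonalizableP; exists [seq ths k | k <- iota 0 d.+1].
  rewrite map_inj_in_uniq ?iota_uniq // => x y.
  by rewrite !mem_iota !add0n !ltnS; exact: ths_inj.
apply: mxminpoly_min; rewrite big_map rmorph_prod.
under eq_bigr do rewrite rmorphB /= horner_mx_X horner_mx_C.
by rewrite -/(index_iota 0 d.+1) big_mkord Bs_annihilator.
Qed.

Lemma diag_eigseq_Bs : diag_eigseq Bs ths d.
Proof.
have [_ [ths_inj _]] := diagAs.
split; first exact: diagonalizable_Bs.
by split; [exact: ths_inj | split; [exact: eigenvalue_Bs | exact: eigenvalue_BsP]].
Qed.

Lemma split_comp_prim_idem_Bs0 i m (u : 'M[K]_(m, n.+1)) :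
  (i <= d)%N -> (u <= U i)%MS ->
  u *m prim_idem Bs ths d 0 = t ^+ i *: (u *m Es 0%N).
Proof.
move=> le_id uU; rewrite !prim_idemE -!scalemxAr scalerA mulrC -scalerA.
congr (_ *: _); rewrite (prod_ord_neq0 d (fun j => Bs - (ths j)%:M)).
rewrite (prod_ord_neq0 d (fun j => As - (ths j)%:M)).
rewrite (big_cat_nat _ (n := i.+1) (F := fun j => Bs - (ths j)%:M)) //.
rewrite (big_cat_nat _ (n := i.+1) (F := fun j => As - (ths j)%:M)) //=.
rewrite -!mulmxE !mulmxA.
have scaleBs j : (j <= d)%N ->
    U j *m (Bs - (ths j)%:M) = t *: (U j *m (As - (ths j)%:M)).
  by move=> le_jd; apply: split_comp_Bs.
rewrite (flag_prod_scale split_comp_lower scaleBs le_id uU) -scalemxAl.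
have w0 := submx_trans (submxMr _ uU) (flag_prod_sub split_comp_lower le_id).
rewrite (mulmx_prod_subC_eigen _ _ _ (split_comp0_Bs_eigen w0)).
by rewrite (mulmx_prod_subC_eigen _ _ _ (split_comp0_As_eigen w0)).
Qed.

Lemma prim_idem_Bs0 : (prim_idem Bs ths d 0 :=: U 0%N)%MS.
Proof.
apply/eqmxP/andP; split.
  rewrite -[X in (X <= _)%MS]mul1mx.
  apply: submx_trans (submxMr _ (submx_full _ sum_split_comp_full)) _.
  rewrite sumsmxMr; apply/sumsmx_subP => i _.
  rewrite (split_comp_prim_idem_Bs0 (leq_ord i) (submx_refl _)) scalemx_sub //.
  by rewrite split_comp0 submxMl.
have := split_comp_prim_idem_Bs0 (leq0n d) (submx_refl (U 0%N)).
rewrite scale1r (mulmx_prim_idem_eigen diagAs (leq0n d) (leq0n d)) ?eqxx.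
  by move=> <-; rewrite submxMl.
exact: split_comp0_As_eigen.
Qed.

Lemma split_comp0_tau i : (i <= d)%N -> (U 0%N *m tau A th i <= U i)%MS.
Proof.
elim: i => [|i IHi] lt_id; first by rewrite /tau big_ord0 mulmx1.
rewrite /tau big_ord_recr /= -mulmxE mulmxA.
exact: submx_trans (submxMr _ (IHi (ltnW lt_id))) (split_comp_raise (ltnW lt_id)).
Qed.

Lemma parameter_array_Bs zeta :
  parameter_array d A th As ths zeta ->
  parameter_array d A th Bs ths (fun i => t ^+ i * zeta i).
Proof.
case=> _ [_ [rank_Es0 zetaE]]; split; first exact: diagA.
split; first exact: diag_eigseq_Bs.
split; first by rewrite prim_idem_Bs0 split_comp0.
move=> i le_id; have [chi [chiE ->]] := zetaE i le_id.
exists (t ^+ i * chi); split; last by rewrite mulrCA.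
move=> v; rewrite prim_idem_Bs0 => vU0.
have vtau_U := submx_trans (submxMr _ vU0) (split_comp0_tau le_id).
by rewrite (split_comp_prim_idem_Bs0 le_id vtau_U) chiE -?split_comp0 ?scalerA.
Qed.

End SplitDecomposition.

Unset Implicit Arguments.

Theorem corollary7p11 (K : closedFieldType) (n : nat) (q t : K)
    (A As Km : 'M[K]_n.+1) (d : nat) (zeta : nat -> K) :
  q != 0 -> (forall m : nat, (0 < m)%N -> q ^+ m != 1) ->
  (1 <= d)%N ->
  let th := fun i : nat => q ^ ((2 * i)%:Z - d%:Z) in
  let ths := fun i : nat => q ^ (d%:Z - (2 * i)%:Z) in
  tridiagonal_system d A th As ths ->
  qSerre q A As ->
  (forall i, (i <= d)%N -> forall u : 'rV[K]_n.+1,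
     (u <= split_comp d A th As ths i)%MS -> u *m Km = ths i *: u) ->
  parameter_array d A th As ths zeta ->
  let B := A in
  let Bs := t *: As + (1 - t) *: Km in
  parameter_array d B th Bs ths (fun i => t ^+ i * zeta i).
Proof.
move=> _ _ _ th ths [diagA [diagAs [tridiagAs [tridiagA irrAAs]]]] _ Km_split.
exact: parameter_array_Bs.
Qed.
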